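(* Let $\tau$ be a representation of a Lie group $\mathbf{G}\subseteq\mathrm{GL}(D)$ on $\mathbb{K}^N$ ($\mathbb{K}\in\{\mathbb{R},\mathbb{C}\}$) and let $\mathcal{D}_B=\sum_{j=1}^DB_j\partial/\partial x_j+mE$ be covariant with respect to $\tau$, with symbol $\sigma_{\mathcal{D}_B}(p_1,\dots,p_D)=i\sum_{j=1}^DB_jp_j$. (a) If $\mathbf{G}\subseteq\mathrm{O}(D)$, the form of $\sigma_{\mathcal{D}_B}$ does not change under the simultaneous coordinate transformations $x\mapsto gx$ in $\mathbb{R}^D$ and $y\mapsto\tau(g)y$ in $\mathbb{K}^N$; that is, $\sigma_{\mathcal{D}_B}(gp)=\tau(g)\,\sigma_{\mathcal{D}_B}(p)\,\tau(g)^{-1}$ for all $g\in\mathbf{G}$, $p\in\mathbb{R}^D$. (b) If $\mathbf{G}$ is $\mathrm{SO}(D)$ or $\mathrm{O}(D)$, then $\det\sigma_{\mathcal{D}_B}(p_1,\dots,p_D)=C\,(p_1^2+\dots+p_D^2)^n$ for some constant $C\in\mathbb{C}$ and $n\in\mathbb{N}$; moreover, if $N$ is odd then $C=0$ (so elliptic operators covariant with respect to a representation of $\mathrm{SO}(D)$ or $\mathrm{O}(D)$ can exist only if $N$ is even).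
   Context: $E$ is the $N\times N$ identity matrix, $m\in\mathbb{R}$, $B_j\in M_{N\times N}(\mathbb{K})$. Covariance of $\mathcal{D}_B$ with respect to $\tau$ means $\sum_{k=1}^D g_{jk}\,\tau(g)B_k\tau(g^{-1})=B_j$ for all $j$ and all $g\in\mathbf{G}$ ($g_{jk}$ the entries of $g$). *)

From HB Require Import structures.
From mathcomp Require Import all_boot all_order all_algebra.
From mathcomp Require Import reals.
From mathcomp Require Export complex.
Set Implicit Arguments. Unset Strict Implicit. Unset Printing Implicit Defensive.
Import Order.TTheory GRing.Theory Num.Theory.
Local Open Scope ring_scope.
Local Open Scope complex_scope.

Inductive scalar_field := K_R | K_C.

(* An element of C lies in K (viewed inside C). *)
Definition in_K (R : rcfType) (K : scalar_field) (z : R[i]) : bool :=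
  if K is K_R then Im z == 0 else true.

Definition mx_in_K (R : rcfType) (K : scalar_field) (N : nat) (A : 'M[R[i]]_N) :=
  forall i j, in_K K (A i j).

Definition orthogonal_mx (R : rcfType) (D : nat) (g : 'M[R]_D) : bool :=
  g *m g^T == 1%:M.
Definition special_orthogonal_mx (R : rcfType) (D : nat) (g : 'M[R]_D) : bool :=
  orthogonal_mx g && (\det g == 1).

Definition is_subgroup_GL (R : rcfType) (D : nat) (G : 'M[R]_D -> Prop) :=
  [/\ G 1%:M,
      (forall g, G g -> g \in unitmx),
      (forall g h, G g -> G h -> G (g *m h)) &
      (forall g, G g -> G (invmx g))].

Definition is_representation (R : rcfType) (K : scalar_field) (D N : nat)
    (G : 'M[R]_D -> Prop) (tau : 'M[R]_D -> 'M[R[i]]_N) :=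
  [/\ (forall g, G g -> tau g \in unitmx),
      (forall g, G g -> mx_in_K K (tau g)),
      tau 1%:M = 1%:M &
      (forall g h, G g -> G h -> tau (g *m h) = tau g *m tau h)].

(* Covariance of D_B = sum_j B_j d/dx_j + m E with respect to tau:
   sum_k g_jk tau(g) B_k tau(g)^{-1} = B_j for all j and g in G. *)
Definition covariant (R : rcfType) (D N : nat) (G : 'M[R]_D -> Prop)
    (tau : 'M[R]_D -> 'M[R[i]]_N) (B : 'I_D -> 'M[R[i]]_N) :=
  forall g, G g -> forall j : 'I_D,
    \sum_(k < D) (g j k)%:C *: (tau g *m B k *m invmx (tau g)) = B j.

Definition symbol (R : rcfType) (D N : nat) (B : 'I_D -> 'M[R[i]]_N)
    (p : 'cV[R]_D) : 'M[R[i]]_N :=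
  'i *: \sum_(j < D) (p j 0)%:C *: B j.

From HB Require Import structures.
From mathcomp Require Import all_boot all_order all_algebra.
From mathcomp Require Import reals complex ring.
Import Order.TTheory GRing.Theory Num.Theory.
Local Open Scope ring_scope.
Local Open Scope complex_scope.
Set Implicit Arguments. Unset Strict Implicit.

(* For orthogonal g the covariance relation can be inverted by g^T, which
   gives sigma(g p) = tau(g) sigma(p) tau(g)^-1; hence f(p) := det sigma(p) is
   invariant under G and homogeneous of degree N. Householder reflections (and,
   for SO(D) with D >= 2, products of two of them) act transitively on every
   sphere, so f(p) = |p|^N f(e_1). When N is odd, f(-p) = (-1)^N f(p) = f(p)
   forces f = 0. *)

Lemma det_1DmulmxC (F : comPzRingType) m n (A : 'M[F]_(m, n)) (B : 'M[F]_(n, m)) :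
  \det (1%:M + A *m B) = \det (1%:M + B *m A).
Proof.
pose M := block_mx 1%:M A (- B) 1%:M.
have M_lu : M = block_mx 1%:M 0 (- B) 1%:M *m block_mx 1%:M A 0 (1%:M + B *m A).
  by rewrite mulmx_block !mul1mx !mulmx1 !mul0mx !addr0 mulNmx addrCA addNr addr0.
have M_ul : M = block_mx (1%:M + A *m B) A 0 1%:M *m block_mx 1%:M 0 (- B) 1%:M.
  by rewrite mulmx_block !mul1mx !mulmx1 !mul0mx !mulmx0 !add0r mulmxN addrK.
have := congr1 determinant M_lu.
by rewrite {1}M_ul !det_mulmx det_lblock det_ublock det_ublock !det1 !mul1r !mulr1.
Qed.

Section Euclidean.
Variables (R : rcfType) (n : nat).
Implicit Types (a b v w : 'cV[R]_n) (g h : 'M[R]_n).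

Definition vdot a b := \sum_(i < n) a i 0 * b i 0.

Lemma trmx_mul_vdot a b : a^T *m b = (vdot a b)%:M.
Proof.
apply/matrixP => i j; rewrite !ord1 !mxE eqxx mulr1n.
by apply: eq_bigr => k _; rewrite mxE.
Qed.

Lemma vdotC a b : vdot a b = vdot b a.
Proof. by apply: eq_bigr => i _; rewrite mulrC. Qed.

Lemma vdotBl a b c : vdot (a - b) c = vdot a c - vdot b c.
Proof. by rewrite /vdot -sumrB; apply: eq_bigr => i _; rewrite !mxE mulrBl. Qed.

Lemma vdotBr a b c : vdot c (a - b) = vdot c a - vdot c b.
Proof. by rewrite !(vdotC c) vdotBl. Qed.

Lemma vdotNN a : vdot (- a) (- a) = vdot a a.
Proof. by apply: eq_bigr => i _; rewrite !mxE mulrNN. Qed.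

Lemma vdotZZ (r : R) a : vdot (r *: a) (r *: a) = r ^+ 2 * vdot a a.
Proof.
rewrite /vdot mulr_sumr; apply: eq_bigr => i _; rewrite !mxE; ring.
Qed.

Lemma vdot_ge0 a : 0 <= vdot a a.
Proof. by apply: sumr_ge0 => i _; rewrite -expr2 sqr_ge0. Qed.

Lemma vdot_eq0 a : (vdot a a == 0) = (a == 0).
Proof.
apply/idP/idP => [|/eqP->]; last by rewrite /vdot big1 // => i _; rewrite mxE mul0r.
rewrite /vdot psumr_eq0 => [/allP a0|i _]; last by rewrite -expr2 sqr_ge0.
apply/eqP/matrixP => i j; rewrite !ord1 mxE.
by have := a0 i (mem_index_enum _); rewrite mulf_eq0 orbb => /eqP.
Qed.

Lemma exists_vdot_eq0 b : (2 <= n)%N -> exists2 w, w != 0 & vdot w b = 0.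
Proof.
move=> n_ge2; set K := kermx b.
have : \rank K != 0%N.
  by rewrite mxrank_ker subn_eq0 -ltnNge (leq_ltn_trans (rank_leq_col b)).
rewrite mxrank_eq0 => K_neq0.
have [i Ki_neq0] : exists i, row i K != 0.
  apply/existsP; apply: contraNT K_neq0 => /existsPn Krows0.
  by apply/eqP/row_matrixP => i; rewrite row0; apply/eqP/negPn/Krows0.
exists (row i K)^T; first by rewrite trmx_eq0.
have := congr1 (fun M : 'M_1 => M 0 0) (trmx_mul_vdot (row i K)^T b).
by rewrite /= trmxK -row_mul mulmx_ker row0 !mxE eqxx mulr1n.
Qed.

Definition householder v : 'M[R]_n := 1%:M - (2 / vdot v v) *: (v *m v^T).

Lemma householder_mul v a :
  householder v *m a = a - (2 * vdot v a / vdot v v) *: v.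
Proof.
rewrite mulmxBl mul1mx -scalemxAl -mulmxA trmx_mul_vdot mul_mx_scalar scalerA.
by rewrite mulrAC.
Qed.

Lemma tr_householder v : (householder v)^T = householder v.
Proof. by rewrite linearB /= trmx1 linearZ /= trmx_mul trmxK. Qed.

Lemma householder_orthogonal v : v != 0 -> orthogonal_mx (householder v).
Proof.
rewrite -vdot_eq0 => vv_neq0; rewrite /orthogonal_mx tr_householder; apply/eqP.
rewrite mulmxBl mul1mx mulmxBr mulmx1 -!scalemxAl -!scalemxAr.
rewrite -mulmxA (mulmxA v^T) trmx_mul_vdot mul_scalar_mx -scalemxAr !scalerA.
set c := 2 / vdot v v.
have -> : c * (c * vdot v v) = c *+ 2 by rewrite /c divfK // mulr_natr.
by rewrite -scalerMnl mulr2n opprB addrK subrK.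
Qed.

Lemma det_householder v : v != 0 -> \det (householder v) = -1.
Proof.
rewrite -vdot_eq0 => vv_neq0.
have -> : householder v = 1%:M + (- (2 / vdot v v) *: v) *m v^T.
  by rewrite /householder -scalemxAl scaleNr.
rewrite det_1DmulmxC -scalemxAr.
rewrite trmx_mul_vdot scale_scalar_mx -raddfD det_scalar1 mulNr divfK //.
by rewrite -[2]/(1 + 1) opprD addNKr.
Qed.

Lemma householder_vdot0 w b : vdot w b = 0 -> householder w *m b = b.
Proof. by move=> wb0; rewrite householder_mul wb0 mulr0 mul0r scale0r subr0. Qed.

Lemma householder_swap a b :
  vdot a a = vdot b b -> a != b -> householder (a - b) *m a = b.
Proof.
move=> ab_eq; rewrite -subr_eq0 -vdot_eq0 => ab_neq0; rewrite householder_mul.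
have -> : 2 * vdot (a - b) a = vdot (a - b) (a - b).
  rewrite vdotBr !vdotBl ab_eq (vdotC b a); ring.
by rewrite divff // scale1r opprB addrC subrK.
Qed.

Lemma orthogonal_mx_mul g h :
  orthogonal_mx g -> orthogonal_mx h -> orthogonal_mx (g *m h).
Proof.
move=> /eqP gg /eqP hh; rewrite /orthogonal_mx trmx_mul -mulmxA (mulmxA h).
by rewrite hh mul1mx gg.
Qed.

Lemma orthogonal_mx1 : @orthogonal_mx R n 1%:M.
Proof. by rewrite /orthogonal_mx trmx1 mulmx1. Qed.

Lemma orthogonal_sphere_orbit a b :
  vdot a a = vdot b b -> exists2 g, orthogonal_mx g & g *m a = b.
Proof.
move=> ab_eq; have [<-|ab_neq] := eqVneq a b.
  by exists 1%:M; rewrite ?mul1mx ?orthogonal_mx1.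
exists (householder (a - b)); last exact: householder_swap.
by rewrite householder_orthogonal // subr_eq0.
Qed.

Lemma special_orthogonal_sphere_orbit a b : (2 <= n)%N ->
  vdot a a = vdot b b -> exists2 g, special_orthogonal_mx g & g *m a = b.
Proof.
move=> n_ge2 ab_eq; have [<-|ab_neq] := eqVneq a b.
  exists 1%:M; last exact: mul1mx.
  by rewrite /special_orthogonal_mx orthogonal_mx1 det1 eqxx.
(* Reflecting in the hyperplane w^perp fixes b and restores determinant 1. *)
have [w w_neq0 wb0] := exists_vdot_eq0 b n_ge2.
have ab_neq0 : a - b != 0 by rewrite subr_eq0.
exists (householder w *m householder (a - b)).
  rewrite /special_orthogonal_mx orthogonal_mx_mul ?householder_orthogonal //=.
  by rewrite det_mulmx !det_householder // mulrNN mulr1.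
by rewrite -mulmxA householder_swap // householder_vdot0.
Qed.

End Euclidean.

Lemma sphere_invariant_homogeneous (R : rcfType) n k (f : 'cV[R]_n -> R[i]) :
    (forall c p, f (c *: p) = c%:C ^+ k * f p) ->
    (forall a b, vdot a a = vdot b b -> f a = f b) ->
  exists C, (forall p, f p = C * (vdot p p)%:C ^+ k./2) /\ (odd k -> C = 0).
Proof.
move=> fZ f_sphere.
have f_odd0 p : odd k -> f p = 0.
  move=> k_odd; have : f (- p) = f p by apply: f_sphere; rewrite vdotNN.
  rewrite -scaleN1r fZ rmorphN1 -signr_odd k_odd expr1 mulN1r => /eqP.
  by rewrite eq_sym -subr_eq0 opprK -mulr2n mulrn_eq0 => /eqP.
(* Dimension 0 has no unit vector to normalise against. *)
case: n f fZ f_sphere f_odd0 => [|n] f fZ f_sphere f_odd0.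
  exists (f 0); split=> [p|/f_odd0 //]; rewrite [p]flatmx0.
  case k_half: k./2 => [|h]; first by rewrite expr0 mulr1.
  have k_gt0 : (0 < k)%N by case: (k) k_half.
  have f00 : f 0 = 0.
    by rewrite -{1}(scale0r (0 : 'cV_0)) fZ rmorph0 expr0n gtn_eqF // mul0r.
  by rewrite f00 mul0r.
pose e : 'cV[R]_n.+1 := delta_mx 0 0.
have ee : vdot e e = 1.
  rewrite /vdot (bigD1 0) //= big1 => [|j /negbTE j_neq0].
    by rewrite !mxE eqxx mulr1 addr0.
  by rewrite !mxE j_neq0 mul0r.
exists (f e); split=> [p|/f_odd0 //].
set r := Num.sqrt (vdot p p).
have -> : f p = f (r *: e) by apply: f_sphere; rewrite vdotZZ ee mulr1 sqr_sqrtr ?vdot_ge0.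
rewrite fZ mulrC; case k_odd: (odd k); first by rewrite f_odd0 ?mul0r.
rewrite -[in r%:C ^+ k](odd_double_half k) k_odd add0n -mul2n exprM -rmorphXn.
by rewrite sqr_sqrtr ?vdot_ge0.
Qed.

Section Covariance.
Variables (R : rcfType) (D N : nat) (G : 'M[R]_D -> Prop).
Variables (tau : 'M[R]_D -> 'M[R[i]]_N) (B : 'I_D -> 'M[R[i]]_N).

Lemma symbolZ c p : symbol B (c *: p) = c%:C *: symbol B p.
Proof.
rewrite /symbol [RHS]scalerA (mulrC c%:C) -scalerA; f_equal; rewrite scaler_sumr.
by apply: eq_bigr => j _; rewrite mxE scalerA rmorphM.
Qed.

Hypothesis covB : covariant G tau B.

Lemma covariant_orthogonal_trmx g k : G g -> orthogonal_mx g ->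
  \sum_(j < D) (g j k)%:C *: B j = tau g *m B k *m invmx (tau g).
Proof.
move=> Gg /eqP/mulmx1C gTg.
under eq_bigr => j _ do rewrite -(covB Gg j) scaler_sumr.
rewrite exchange_big /=.
under eq_bigr => l _ do under eq_bigr => j _ do rewrite scalerA -rmorphM.
under eq_bigr => l _ do rewrite -scaler_suml -rmorph_sum.
have gTgE l : \sum_(j < D) g j k * g j l = (k == l)%:R.
  have := congr1 (fun M : 'M_D => M k l) gTg; rewrite /= !mxE => <-.
  by apply: eq_bigr => j _; rewrite mxE.
under eq_bigr => l _ do rewrite gTgE.
rewrite (bigD1 k) //= big1 => [|l l_neq_k]; first by rewrite eqxx scale1r addr0.
by rewrite eq_sym (negbTE l_neq_k) scale0r.
Qed.

Lemma symbol_orthogonal_conj g p : G g -> orthogonal_mx g ->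
  symbol B (g *m p) = tau g *m symbol B p *m invmx (tau g).
Proof.
move=> Gg g_orth; rewrite /symbol -scalemxAr -scalemxAl; congr (_ *: _).
rewrite mulmx_sumr mulmx_suml.
under [RHS]eq_bigr => k _ do
  rewrite -scalemxAr -scalemxAl -covariant_orthogonal_trmx // scaler_sumr.
rewrite exchange_big /=; apply: eq_bigr => j _.
rewrite mxE rmorph_sum scaler_suml; apply: eq_bigr => k _.
by rewrite scalerA rmorphM mulrC.
Qed.

Lemma det_symbol_orthogonal g p : G g -> orthogonal_mx g -> tau g \in unitmx ->
  \det (symbol B (g *m p)) = \det (symbol B p).
Proof.
move=> Gg g_orth tau_unit; rewrite symbol_orthogonal_conj // !det_mulmx det_inv.
by rewrite (mulrC (\det (tau g))) mulfK // -unitfE -unitmxE.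
Qed.

End Covariance.

Theorem lemma2p7 (R : realType) (K : scalar_field) (D N : nat)
    (G : 'M[R]_D -> Prop) (tau : 'M[R]_D -> 'M[R[i]]_N)
    (B : 'I_D -> 'M[R[i]]_N) (m : R) :
  is_subgroup_GL G ->
  is_representation K G tau ->
  (forall j, mx_in_K K (B j)) ->
  covariant G tau B ->
  (* (a) *)
  ((forall g, G g -> orthogonal_mx g) ->
     forall g p, G g ->
       symbol B (g *m p) = tau g *m symbol B p *m invmx (tau g)) /\
  (* (b) *)
  ((forall g, G g <-> special_orthogonal_mx g) /\ (2 <= D)%N \/
   (forall g, G g <-> orthogonal_mx g) ->
     exists (C : R[i]) (n : nat),
       (forall p : 'cV[R]_D,
          \det (symbol B p) = C * ((\sum_(j < D) p j 0 ^+ 2)%:C) ^+ n) /\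
       (odd N -> C = 0)).
Proof.
move=> _ [tau_unit _ _ _] _ covB.
split=> [G_orth g p Gg | G_full].
  exact: (symbol_orthogonal_conj covB p Gg (G_orth g Gg)).
have G_orth g : G g -> orthogonal_mx g.
  by case: G_full => [[G_SO _] /G_SO /andP[] | G_O /G_O].
have G_sphere_orbit a b : vdot a a = vdot b b -> exists2 g, G g & g *m a = b.
  case: G_full => [[G_SO D_ge2] | G_O] ab_eq.
  - by have [g /G_SO Gg <-] := special_orthogonal_sphere_orbit D_ge2 ab_eq; exists g.
  - by have [g /G_O Gg <-] := orthogonal_sphere_orbit ab_eq; exists g.
have det_symbolZ c p : \det (symbol B (c *: p)) = c%:C ^+ N * \det (symbol B p).
  by rewrite symbolZ detZ.
have det_symbol_sphere a b :
    vdot a a = vdot b b -> \det (symbol B a) = \det (symbol B b).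
  move=> /G_sphere_orbit [g Gg <-].
  by rewrite (det_symbol_orthogonal covB) ?G_orth ?tau_unit.
have [C [detE C_N_odd]] := sphere_invariant_homogeneous det_symbolZ det_symbol_sphere.
(* vdot p p is convertible to the sum of squares in the statement. *)
by exists C, N./2; split=> // p; rewrite detE.
Qed.
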